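(* Let $f_1,\dots,f_n$ satisfy Assumption A1 and let $f_0:\mathbb{R}^d\to\mathbb{R}$ be smooth. If $x\in\mathrm{Pareto}(F)$ is such that $\{\nabla f_1(x),\dots,\nabla f_n(x)\}$ is Pareto generic and $x$ is weakly preference stationary, then $x$ is preference stationary.
   Context: Assumption A1: each $f_i:\mathbb{R}^d\to\mathbb{R}$ is twice differentiable with $\mu\mathbf{I}\preceq\nabla^2 f_i\preceq L\mathbf{I}$, $0<\mu\le L$. $F=(f_1,\dots,f_n)$, $\nabla F(x)\in\mathbb{R}^{n\times d}$ its Jacobian, $\Delta^{n-1}$ the simplex, $f_\beta=\sum_i\beta_if_i$, $x^*(\beta)=x_\beta=\operatorname{argmin}_xf_\beta(x)$ with $\nabla x^*(\beta)=-\nabla^2f_\beta(x_\beta)^{-1}\nabla F(x_\beta)^\top$. $\mathrm{Pareto}(F)$ is the set of Pareto optimal points (equivalently $x$ with $\nabla f_\beta(x)=0$ for some $\beta\in\Delta^{n-1}$). Let $\Delta^{n-1}(x):=\{\beta\in\Delta^{n-1}:\nabla f_\beta(x)=0\}$. A point $x\in\mathrm{Pareto}(F)$ is weakly preference stationary if there exists $\beta\in\Delta^{n-1}(x)$ with $-\nabla(f_0\circ x^* )(\beta)^\top(\beta'-\beta)\le0$ for all $\beta'\in\Delta^{n-1}$; it is preference stationary if this holds for all $\beta\in\Delta^{n-1}(x)$. A set $\{v_1,\dots,v_n\}\subset\mathbb{R}^d$ is Pareto generic if $\beta_1v_1+\dots+\beta_nv_n=0$ for some $\beta\in\Delta^{n-1}$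 and $\mathrm{rank}(v_1,\dots,v_n)=n-1$. *)

From HB Require Import structures.
From mathcomp Require Import all_boot all_order all_algebra.
From mathcomp Require Import all_classical all_reals all_analysis.
Set Implicit Arguments. Unset Strict Implicit. Unset Printing Implicit Defensive.
Import Order.TTheory GRing.Theory Num.Theory.
Import numFieldNormedType.Exports.
Local Open Scope classical_set_scope.
Local Open Scope ring_scope.

Section Defs.
Variables (R : realType) (d n : nat).

Definition ebasis (j : 'I_d) : 'rV[R]_d := delta_mx 0 j.

Definition grad (g : 'rV[R]_d -> R) (x : 'rV[R]_d) : 'rV[R]_d :=
  \row_j ('D_(ebasis j) g x).

Definition hess (g : 'rV[R]_d -> R) (x : 'rV[R]_d) : 'M[R]_d :=
  \matrix_(j, k) ('D_(ebasis k) (fun y => 'D_(ebasis j) g y) x).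

Definition qform (A : 'M[R]_d) (v : 'rV[R]_d) : R := (v *m A *m v^T) 0 0.
Definition sqnorm (v : 'rV[R]_d) : R := (v *m v^T) 0 0.

Fixpoint iterD (vs : seq 'rV[R]_d) (g : 'rV[R]_d -> R) : 'rV[R]_d -> R :=
  match vs with
  | [::] => g
  | v :: vs' => fun x => 'D_v (iterD vs' g) x
  end.

Definition smoothC (g : 'rV[R]_d -> R) : Prop :=
  forall vs : seq 'rV[R]_d,
    continuous (iterD vs g) /\ forall x v, derivable (iterD vs g) x v.

Definition assumptionA1 (mu L : R) (f : 'I_n -> 'rV[R]_d -> R) : Prop :=
  0 < mu /\ mu <= L /\
  forall i x, differentiable (f i) x /\ differentiable (grad (f i)) x /\
    forall v, mu * sqnorm v <= qform (hess (f i) x) v <= L * sqnorm v.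

Definition jacF (f : 'I_n -> 'rV[R]_d -> R) (x : 'rV[R]_d) : 'M[R]_(n, d) :=
  \matrix_(i, j) (grad (f i) x 0 j).

Definition simplexR : set 'rV[R]_n :=
  [set b | (forall i, 0 <= b 0 i) /\ \sum_i b 0 i = 1].

Definition fbeta (f : 'I_n -> 'rV[R]_d -> R) (b : 'rV[R]_n) : 'rV[R]_d -> R :=
  fun y => \sum_i b 0 i * f i y.

(* xstar(beta) = argmin f_beta (chosen minimizer; unique under A1) *)
Definition xstar (f : 'I_n -> 'rV[R]_d -> R) (b : 'rV[R]_n) : 'rV[R]_d :=
  xget 0 [set y | forall z, fbeta f b y <= fbeta f b z].

Definition pareto (f : 'I_n -> 'rV[R]_d -> R) : set 'rV[R]_d :=
  [set x | ~ exists y, (forall i, f i y <= f i x) /\ (exists i, f i y < f i x)].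

Definition simplex_at (f : 'I_n -> 'rV[R]_d -> R) (x : 'rV[R]_d) : set 'rV[R]_n :=
  [set b | simplexR b /\ grad (fbeta f b) x = 0].

Definition dxstar (f : 'I_n -> 'rV[R]_d -> R) (b : 'rV[R]_n) : 'M[R]_(d, n) :=
  - (invmx (hess (fbeta f b) (xstar f b)) *m (jacF f (xstar f b))^T).

Definition pref_grad (f0 : 'rV[R]_d -> R) (f : 'I_n -> 'rV[R]_d -> R)
  (b : 'rV[R]_n) : 'rV[R]_n :=
  grad f0 (xstar f b) *m dxstar f b.

Definition stationary_at (f0 : 'rV[R]_d -> R) (f : 'I_n -> 'rV[R]_d -> R)
  (b : 'rV[R]_n) : Prop :=
  forall b', simplexR b' -> - ((pref_grad f0 f b) *m (b' - b)^T) 0 0 <= 0.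

Definition weakly_pref_stationary f0 f (x : 'rV[R]_d) : Prop :=
  pareto f x /\ exists b, simplex_at f x b /\ stationary_at f0 f b.

Definition pref_stationary f0 f (x : 'rV[R]_d) : Prop :=
  pareto f x /\ forall b, simplex_at f x b -> stationary_at f0 f b.

Definition pareto_generic (V : 'M[R]_(n, d)) : Prop :=
  (exists b, simplexR b /\ b *m V = 0) /\ \rank V = n.-1.

End Defs.

From HB Require Import structures.
From mathcomp Require Import all_boot all_order all_algebra.
From mathcomp Require Import all_classical all_reals all_analysis.
Set Implicit Arguments. Unset Strict Implicit. Unset Printing Implicit Defensive.
Import Order.TTheory GRing.Theory Num.Theory.
Import numFieldNormedType.Exports.
Local Open Scope classical_set_scope.
Local Open Scope ring_scope.

(* The gradient of f_beta at x is the row vector beta * \nabla F(x), so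
   Delta^{n-1}(x) is the set of points of the simplex lying in the left kernel
   of \nabla F(x).  Pareto genericity makes this kernel a line, which meets the
   hyperplane {sum_i beta_i = 1} in at most one point: Delta^{n-1}(x) is a
   singleton, and then "for some beta" and "for all beta" coincide. *)

Section KernelLine.
Variables (F : fieldType) (n d : nat) (V : 'M[F]_(n, d)).
Hypothesis rankV : \rank V = n.-1.

Lemma kermx_rank1 : (0 < n)%N -> \rank (kermx V) = 1%N.
Proof. by move=> n_gt0; rewrite mxrank_ker rankV -{1}(prednK n_gt0) subSnn. Qed.

Lemma ker_colinear (b1 b2 : 'rV[F]_n) :
  b1 != 0 -> b1 *m V = 0 -> b2 *m V = 0 -> exists a, b2 = a *: b1.
Proof.
move=> b1_neq0 /sub_kermxP b1_ker /sub_kermxP b2_ker.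
have n_gt0 : (0 < n)%N.
  by case: n V b1 b2 rankV b1_neq0 {b1_ker b2_ker} => // ? b1' ? _; rewrite thinmx0 eqxx.
have [_ ker_b1] := mxrank_leqif_sup b1_ker.
have ker_sub_b1 : (kermx V <= b1)%MS by rewrite -ker_b1 kermx_rank1 // rank_rV b1_neq0.
by have /sub_rVP[a ->] := submx_trans b2_ker ker_sub_b1; exists a.
Qed.

Lemma ker_sum1_uniq (b1 b2 : 'rV[F]_n) :
  \sum_i b1 0 i = 1 -> \sum_i b2 0 i = 1 ->
  b1 *m V = 0 -> b2 *m V = 0 -> b1 = b2.
Proof.
move=> sum_b1 sum_b2 b1_ker b2_ker.
have b1_neq0 : b1 != 0.
  apply: contra_eq_neq sum_b1 => ->.
  by rewrite (eq_bigr (fun _ => 0)) => [|i _]; rewrite ?big1 ?mxE // eq_sym oner_eq0.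
have [a b2E] := ker_colinear b1_neq0 b1_ker b2_ker.
move: sum_b2; rewrite b2E (eq_bigr (fun i => a * b1 0 i)) => [|i _]; last by rewrite mxE.
by rewrite -mulr_sumr sum_b1 mulr1 => ->; rewrite scale1r.
Qed.

End KernelLine.

Lemma grad_fbetaE (R : realType) (d n : nat) (f : 'I_n -> 'rV[R]_d -> R)
    (b : 'rV[R]_n) (x : 'rV[R]_d) :
  (forall i, differentiable (f i) x) -> grad (fbeta f b) x = b *m jacF f x.
Proof.
move=> f_diff; apply/rowP => j; rewrite !mxE.
have -> : fbeta f b = \sum_(i < n) (b 0 i \*: f i).
  by apply/funext => y; rewrite /fbeta fct_sumE; apply: eq_bigr.
rewrite derive_sum => [|i]; last exact/derivableZ/diff_derivable.
apply: eq_bigr => i _; rewrite deriveZ; last exact: diff_derivable.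
by rewrite !mxE.
Qed.

Lemma simplex_at_uniq (R : realType) (d n : nat) (f : 'I_n -> 'rV[R]_d -> R)
    (x : 'rV[R]_d) (b1 b2 : 'rV[R]_n) :
  (forall i, differentiable (f i) x) -> \rank (jacF f x) = n.-1 ->
  simplex_at f x b1 -> simplex_at f x b2 -> b1 = b2.
Proof.
move=> f_diff rankJ [[_ sum_b1] grad_b1] [[_ sum_b2] grad_b2].
rewrite !grad_fbetaE // in grad_b1 grad_b2.
by apply: (ker_sum1_uniq rankJ).
Qed.

Theorem proposition6 (R : realType) (d n : nat) (mu L : R)
  (f : 'I_n -> 'rV[R]_d -> R) (f0 : 'rV[R]_d -> R) (x : 'rV[R]_d) :
  assumptionA1 mu L f ->
  smoothC f0 ->
  pareto f x ->
  pareto_generic (jacF f x) ->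
  weakly_pref_stationary f0 f x ->
  pref_stationary f0 f x.
Proof.
move=> [_ [_ hA1]] _ x_pareto [_ rankJ] [_ [b0 [b0_at b0_stat]]].
have f_diff i : differentiable (f i) x := (hA1 i x).1.
split=> // b b_at.
by rewrite -(simplex_at_uniq f_diff rankJ b0_at b_at).
Qed.
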